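(* For every point $q\in\partial\Sigma''$, the real hyperplane $h_q\subset\mathbb{P}^{n+1}$ satisfies $h_q|_\Sigma=q+\bar q+2D'_q$ for some real effective divisor $D'_q$ of degree $n-1$ on $\Sigma$, where $\bar q=\sigma(q)$.
   Context: Fix $n\ge2$, reals $a_1<\dots<a_{2n}$, $f(z)=\prod(z-a_i)$. $\Lambda\subset\mathbb{P}^n$ is a rational normal curve of degree $n$ with coordinate $z$ (real part $\Lambda^\sigma=\mathbb{R}\cup\{\infty\}$), ${\rm C}(\Lambda)\subset\mathbb{P}^{n+1}$ its cone, $\pi:\mathbb{P}^{n+1}\dashrightarrow\mathbb{P}^n$ the projection from the vertex, $\Sigma=\{v^2=f(z)\}\subset{\rm C}(\Lambda)$ ($v$ fiber coordinate of $\mathscr O_\Lambda(n)\cong{\rm C}(\Lambda)\setminus$vertex), hyperelliptic with double cover $\pi:\Sigma\to\Lambda$, ramification points $r_i$ over $a_i$, hyperelliptic involution $\tau$, real structure $\sigma(v,z)=((-1)^n\bar v,\bar z)$. Arcs: $I_i=[a_i,a_{i+1}]$ for $1\le i\le 2n-1$, $I_0=[a_{2n},+\infty]\cup[-\infty,a_1]$. $\pi^{-1}(I_i)$ is a circle; if $i\equiv n\pmod2$ it is pointwise $\sigma$-fixed (real circle $\Sigma^\sigma_i$), otherwise (pure imaginary circle $\Sigma_i$) $\sigma$ coincides with $\tau$ on it. The real circles cut $\Sigma$ into two closed halves exchanged by $\sigma$; $\Sigma'$ is one; the arcs $\Sigma_i\cap\Sigma'$ cut $\Sigma'$ into two closed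 halves, and $\Sigma''$ (the quarter) is one of them. $\partial\Sigma''$ consists of $2n$ arcs, one over each $I_i$ mapped homeomorphically onto $I_i$ by $\pi$; the one over $I_n$ is the central semicircle $(\Sigma^\sigma_n)'$. For $q\in\partial\Sigma''$ with $\lambda=\pi(q)\in I_i$: if $0\le i<n$, $h_q=\pi^{-1}(\underline h)$ where $\underline h\subset\mathbb{P}^n$ is the hyperplane passing through $a_1,\dots,a_i$ and through $\lambda$ with contact order $n-i$ to $\Lambda$ at $\lambda$ (for $i=0$: the osculating hyperplane at $\lambda$); if $n<i\le2n-1$, $h_q=\pi^{-1}(\underline h)$ with $\underline h$ through $a_{i+1},\dots,a_{2n}$ and contact order $i-n$ at $\lambda$; if $q$ lies on the central semicircle, $h_q$ is the hyperplane with $h_q|_\Sigma=2D$, where $D$ is the unique real member of the pencil $|r_1+\dots+r_n|$ containing $q$. *)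

From HB Require Import structures.
From mathcomp Require Import all_boot all_order all_algebra.
From mathcomp Require Import complex.
Set Implicit Arguments. Unset Strict Implicit. Unset Printing Implicit Defensive.
Import Order.TTheory GRing.Theory Num.Theory.
Local Open Scope ring_scope.

Section Hyperelliptic.
Variable R : rcfType.
Local Notation C := (R[i]).
Local Notation rc := (real_complex R).

(* n and the real branch values a_1 < ... < a_(2n) (indices 1..2n are used) *)
Variable n : nat.
Variable a : nat -> R.

Definition fpoly : {poly C} := \prod_(1 <= j < (2 * n).+1) ('X - (rc (a j))%:P).

(* Points of Sigma: an affine point (z, v) of { v^2 = f(z) }, or one of the two
   points at infinity: inr true  = infinity_+ (where v/z^n -> 1),
                       inr false = infinity_- (where v/z^n -> -1). *)
Definition point := ((C * C) + bool)%type.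

Definition onSigma (P : point) : Prop :=
  match P with inl (z, v) => v ^+ 2 = fpoly.[z] | inr _ => True end.

Definition sigma (P : point) : point :=
  match P with
  | inl (z, v) => inl (conjc z, (-1) ^+ n * conjc v)
  | inr s => inr (if odd n then ~~ s else s)
  end.

Definition rpt (j : nat) : point := inl (rc (a j), 0).

(* the projection pi : Sigma -> Lambda = P^1; None = infinity *)
Definition proj (P : point) : option C :=
  match P with inl (z, _) => Some z | inr _ => None end.

Definition overI (i : nat) (q : point) : Prop :=
  if i == 0%N then
    (exists s, q = inr s) \/
    (exists (x : R) (v : C), q = inl (rc x, v) /\ (x <= a 1 \/ a (2 * n) <= x))
  else exists (x : R) (v : C), q = inl (rc x, v) /\ a i <= x <= a i.+1.

(* padded reversal: t^m p(1/t) for size p <= m+1 *)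
Definition revpad (m : nat) (p : {poly C}) : {poly C} :=
  \poly_(k < m.+1) p`_(m - k).

(* Order of vanishing of the function A(z) + B(z) v at the affine point
   (alpha, beta) of the curve { v^2 = g(z) } (g with simple roots) is >= k:
   - beta <> 0: z - alpha is a local parameter and v is congruent to any
     polynomial w with w(alpha) = beta and w^2 = g mod (z-alpha)^k;
   - beta = 0: ramification point, order = multiplicity of alpha in A^2 - B^2 g. *)
Definition ordAffGe (g A B : {poly C}) (alpha beta : C) (k : nat) : Prop :=
  if beta == 0 then is_true (('X - alpha%:P) ^+ k %| (A ^+ 2 - B ^+ 2 * g))
  else exists w : {poly C}, w.[alpha] = beta /\
         ('X - alpha%:P) ^+ k %| (g - w ^+ 2) /\
         ('X - alpha%:P) ^+ k %| (A + B * w).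

(* Sections of pi^* O_{P^1}(m) on Sigma: F = A(z) + B(z) v with deg A <= m,
   deg B <= m - n.  ordGe m A B P k : ord_P(F) >= k.  At infinity we use
   t = 1/z, F t^m = A~(t) + B~(t) v~ with v~ = t^n v, v~^2 = t^(2n) f(1/t). *)
Definition ordGe (m : nat) (A B : {poly C}) (P : point) (k : nat) : Prop :=
  match P with
  | inl (z, v) => ordAffGe fpoly A B z v k
  | inr s => ordAffGe (revpad (2 * n) fpoly) (revpad m A) (revpad (m - n) B)
               0 (if s then 1 else -1) k
  end.

Definition ordEq (m : nat) (A B : {poly C}) (P : point) (k : nat) : Prop :=
  ordGe m A B P k /\ ~ ordGe m A B P k.+1.

Definition isSection (m : nat) (A B : {poly C}) : Prop :=
  (size A <= m.+1)%N /\ (B == 0 \/ (size B + n <= m.+1)%N) /\ (A != 0 \/ B != 0).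

(* linear equivalence of effective divisors (as multisets of points):
   D - E = div(F2/F1) for nonzero sections F1, F2 of the same pi^*O(m) *)
Definition linEq (D E : seq point) : Prop :=
  exists (m : nat) (A1 B1 A2 B2 : {poly C}),
    isSection m A1 B1 /\ isSection m A2 B2 /\
    forall P, onSigma P -> exists k1 k2,
      ordEq m A1 B1 P k1 /\ ordEq m A2 B2 P k2 /\
      (k1 + count_mem P D = k2 + count_mem P E)%N.

Definition realEffDiv (D : seq point) (d : nat) : Prop :=
  (forall P, P \in D -> onSigma P) /\ size D = d /\ perm_eq (map sigma D) D.

(* hyperplanes of P^{n+1}: sum_i c_i X_i + b Y = 0, (c, b) <> 0, restricting to
   Sigma as the section c(z) + b v of pi^*O(n). *)
Definition isHyperplane (c : {poly C}) (b : C) : Prop := isSection n c b%:P.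

(* multiplicity at x in P^1 of the divisor cut on Lambda by the hyperplane
   sum_i c_i X_i = 0 of P^n *)
Definition multLam (c : {poly C}) (x : option C) : nat :=
  match x with Some al => mup al c | None => (n - (size c).-1)%N end.

Definition hq (i : nat) (q : point) (c : {poly C}) (b : C) : Prop :=
  if (i < n)%N then
    b = 0 /\ isHyperplane c b /\
    forall x, multLam c x =
      count_mem x ([seq Some (rc (a j)) | j <- iota 1 i] ++ nseq (n - i) (proj q))
  else if (n < i)%N then
    b = 0 /\ isHyperplane c b /\
    forall x, multLam c x =
      count_mem x ([seq Some (rc (a j)) | j <- iota i.+1 (2 * n - i)]
                   ++ nseq (i - n) (proj q))
  else
    isHyperplane c b /\
    exists D : seq point, realEffDiv D n /\ q \in D /\
      linEq D [seq rpt j | j <- iota 1 n] /\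
      forall P, onSigma P -> ordEq n c b%:P P (2 * count_mem P D).

End Hyperelliptic.

From HB Require Import structures.
From mathcomp Require Import all_boot all_order all_algebra.
From mathcomp Require Import complex.
From mathcomp Require Import ring lra zify.
Import Order.TTheory GRing.Theory Num.Theory.
Local Open Scope ring_scope.

(* Off the central semicircle, h_q is the pullback of a hyperplane of P^n, so its
   divisor on Sigma is the pullback of its divisor on Lambda: every branch point
   a_j it passes through contributes 2 r_j, and its contact of order e with Lambda
   at pi(q) contributes e (q + tau q).  Over a real point of the arc I_i the real
   structure sigma acts on the fibre as tau or as the identity according to the
   parity of n + i, which is that of e; so e (q + tau q) - q - sigma q is twice a
   real divisor.  On the central semicircle sigma q = q and D' = D - q. *)

Section Polynomials.
Set Implicit Arguments. Unset Strict Implicit.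

Lemma mup_exact (F : fieldType) (p : {poly F}) (x : F) : p != 0 ->
  ('X - x%:P) ^+ mup x p %| p /\ ~ ('X - x%:P) ^+ (mup x p).+1 %| p.
Proof. by move=> p0; rewrite -!mup_geq // ltnn. Qed.

Lemma hensel_sqrt (F : numFieldType) (g : {poly F}) (al be : F) :
  be != 0 -> g.[al] = be ^+ 2 ->
  forall k, exists w : {poly F}, w.[al] = be /\ ('X - al%:P) ^+ k %| g - w ^+ 2.
Proof.
move=> be0 gal; case=> [|k]; first by exists be%:P; rewrite hornerC expr0 dvd1p.
elim: k => [|k [w [wal /dvdpP [h eh]]]].
  exists be%:P; rewrite hornerC expr1 dvdp_XsubCl; split=> //.
  by rewrite /root !hornerE gal subrr.
set Y := ('X - al%:P) ^+ k.+1 in eh.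
have Y0 : Y.[al] = 0 by rewrite /Y horner_exp hornerXsubC subrr expr0n.
(* Newton step: w + c Y squares to g modulo Y ('X - al) when 2 be c = h(al). *)
set c := h.[al] / (2 * be).
set Q := h - 2%:R * c%:P * w - c%:P ^+ 2 * Y.
exists (w + c%:P * Y); split; first by rewrite hornerD hornerM Y0 wal mulr0 addr0.
have -> : g - (w + c%:P * Y) ^+ 2 = Q * Y.
  by rewrite /Q -[g](subrK (w ^+ 2)) eh; ring.
have /dvdpP [Q' ->] : 'X - al%:P %| Q.
  rewrite dvdp_XsubCl /root /Q !(hornerD, hornerN, hornerM, hornerC) Y0 wal.
  by rewrite mulr0 subr0 /c; apply/eqP; field.
by rewrite -mulrA /Y -exprS dvdp_mull.
Qed.

End Polynomials.

Section Curve.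
Set Implicit Arguments. Unset Strict Implicit.
Variable R : rcfType.
Local Notation C := (R[i]).
Local Notation rc := (real_complex R).
Variable n : nat.
Variable a : nat -> R.
Local Notation onSigma := (@onSigma R n a).
Local Notation sigma := (@sigma R n).
Local Notation proj := (@proj R).
Local Notation fpoly := (@fpoly R n a).
Local Notation revpad := (@revpad R).
Local Notation ordEq := (@ordEq R n a).
Local Notation multLam := (@multLam R n).

Definition tau (P : point R) : point R :=
  match P with inl (z, v) => inl (z, - v) | inr s => inr (~~ s) end.

Lemma tauK : involutive tau.
Proof. by case=> [[z v]|s] /=; rewrite ?opprK ?negbK. Qed.

Lemma sigma_tau (P : point R) : sigma (tau P) = tau (sigma P).
Proof. by case: P => [[z v]|s] /=; [rewrite rmorphN mulrN | case: (odd n)]. Qed.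

Lemma onSigma_tau (P : point R) : onSigma P -> onSigma (tau P).
Proof. by case: P => [[z v]|s] //=; rewrite sqrrN. Qed.

Lemma proj_tau (P : point R) : proj (tau P) = proj P.
Proof. by case: P => [[z v]|s]. Qed.

Lemma proj_inj_tau (P Q : point R) : onSigma P -> onSigma Q -> proj P = proj Q ->
  P = Q \/ P = tau Q.
Proof.
case: P Q => [[z v]|s] [[z' v']|s'] //= hP hQ; last by case: s s' => -[]; auto.
case=> ez; subst z'; move/eqP: hQ; rewrite -hP eq_sym -subr_eq0 subr_sqr mulf_eq0.
by rewrite subr_eq0 addr_eq0 => /orP [/eqP ->|/eqP ->]; auto.
Qed.

Lemma tau_fixE (P : point R) : (P == tau P) = if P is inl (_, v) then v == 0 else false.
Proof.
case: P => [[z v]|[]] //=; apply/eqP/eqP => [[]|->]; last by rewrite oppr0.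
by move/eqP; rewrite -subr_eq0 opprK -mulr2n mulrn_eq0 => /eqP.
Qed.

Definition ramification (P : point R) : nat := if P == tau P then 2%N else 1%N.

Lemma ramification_fibre (P Q : point R) : onSigma P -> onSigma Q ->
  (ramification P * (proj P == proj Q) = (P == Q) + (P == tau Q))%N.
Proof.
move=> hP hQ; rewrite /ramification.
have [ePQ|nePQ] := eqVneq (proj P) (proj Q); last first.
  have nPQ : P != Q by apply: contraNneq nePQ => ->.
  have nPtQ : P != tau Q by apply: contraNneq nePQ => ->; rewrite proj_tau.
  by rewrite (negbTE nPQ) (negbTE nPtQ); case: ifP.
have [->|->] := proj_inj_tau hP hQ ePQ; rewrite ?tauK eqxx.
  by case: (Q == tau Q).
by case: (tau Q == Q).
Qed.

Lemma ramification_count (P : point R) (E : seq (point R)) :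
  onSigma P -> {in E, forall Q, onSigma Q} ->
  (ramification P * count_mem (proj P) (map proj E) = count_mem P (E ++ map tau E))%N.
Proof.
move=> hP; elim: E => [|Q E IH] hE /=; first by rewrite muln0.
have /IH : {in E, forall Q, onSigma Q} by move=> Q' QE; apply/hE/mem_behead.
have onQ := hE Q (mem_head _ _).
rewrite !count_cat /= mulnDr [proj Q == _]eq_sym (ramification_fibre hP onQ) => ->.
by rewrite ![Q == _]eq_sym [tau Q == _]eq_sym; lia.
Qed.

Lemma ordAffGe_unramified (g A : {poly C}) (al be : C) k :
  be != 0 -> g.[al] = be ^+ 2 ->
  ordAffGe g A 0 al be k <-> ('X - al%:P) ^+ k %| A.
Proof.
move=> be0 gal; rewrite /ordAffGe (negbTE be0); split.
  by case=> w [_ [_]]; rewrite mul0r addr0.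
by have [w [wal dw]] := hensel_sqrt be0 gal k; exists w; rewrite mul0r addr0.
Qed.

Lemma ordAffGe_ramified (g A : {poly C}) (al : C) k :
  ordAffGe g A 0 al 0 k <-> ('X - al%:P) ^+ k %| A ^+ 2.
Proof. by rewrite /ordAffGe eqxx expr0n /= mul0r subr0. Qed.

Lemma revpad0 m : revpad m 0 = 0.
Proof. by apply/polyP => k; rewrite coef_poly !coef0; case: ifP. Qed.

Lemma revpad_coef0 (p : {poly C}) : (revpad (size p).-1 p)`_0 = lead_coef p.
Proof. by rewrite coef_poly subn0. Qed.

Lemma revpad_XnM (p : {poly C}) m : (size p <= m.+1)%N ->
  revpad m p = 'X^(m - (size p).-1) * revpad (size p).-1 p.
Proof.
move=> sp; apply/polyP => k; rewrite coefXnM !coef_poly.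
case: (ltnP k (m - (size p).-1)) => km.
  by case: ifP => // _; rewrite nth_default //; move: sp km; case: (size p) => /=; lia.
case: (ltnP k m.+1) => km1; last by rewrite ifF //; apply/negbTE; rewrite -leqNgt; lia.
by rewrite ifT; [congr (_`_ _) | ]; lia.
Qed.

Lemma revpad_neq0 (p : {poly C}) m : p != 0 -> (size p <= m.+1)%N -> revpad m p != 0.
Proof.
move=> p0 sp; rewrite revpad_XnM // mulf_neq0 ?expf_neq0 ?polyX_eq0 //.
rewrite -lead_coef_eq0 in p0.
by apply: contraNneq p0 => revp0; rewrite -revpad_coef0 revp0 coef0.
Qed.

Lemma mup0_revpad (p : {poly C}) m : p != 0 -> (size p <= m.+1)%N ->
  mup 0 (revpad m p) = (m - (size p).-1)%N.
Proof.
move=> p0 sp; rewrite revpad_XnM // mupMl; last first.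
  by rewrite /root horner_coef0 revpad_coef0 lead_coef_eq0.
by rewrite -[X in X ^+ _]subr0 mup_XsubCX eqxx.
Qed.

Lemma size_fpoly : size fpoly = (2 * n).+1.
Proof. by rewrite size_prod_XsubC /index_iota size_iota subSS subn0. Qed.

Lemma revpad_fpoly_at0 : (revpad (2 * n) fpoly).[0] = 1.
Proof.
have /monicP : fpoly \is monic by apply: monic_prod_XsubC.
by rewrite horner_coef0 -revpad_coef0 size_fpoly.
Qed.

Lemma ordEq_pullback (c : {poly C}) (P : point R) : c != 0 -> (size c <= n.+1)%N ->
  onSigma P -> ordEq n c 0%:P P (ramification P * multLam c (proj P)).
Proof.
move=> c0 sc; rewrite /ordEq /ordGe /ramification tau_fixE polyC0.
case: P => [[z v]|s] /= onP.
  have [->|v0] := eqVneq v 0.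
    rewrite !ordAffGe_ramified mul2n -addnn -mupM // -expr2.
    exact/mup_exact/expf_neq0.
  by rewrite !(ordAffGe_unramified _ _ v0 (esym onP)) mul1n; apply: mup_exact.
have s2 : (if s then 1 else -1 : C) ^+ 2 = 1 by case: s; rewrite ?sqrrN expr1n.
have s0 : (if s then 1 else -1 : C) != 0 by case: (s); rewrite ?oppr_eq0 oner_eq0.
rewrite revpad0 !(ordAffGe_unramified _ _ s0) ?revpad_fpoly_at0 ?s2 // mul1n.
by rewrite -(mup0_revpad c0 sc); apply/mup_exact/revpad_neq0.
Qed.

Lemma ordEq_pullback_divisor (c : {poly C}) (E : seq (point R)) (P : point R) :
  c != 0 -> (size c <= n.+1)%N -> {in E, forall Q, onSigma Q} ->
  (forall x, multLam c x = count_mem x (map proj E)) ->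
  onSigma P -> ordEq n c 0%:P P (count_mem P (E ++ map tau E)).
Proof.
by move=> c0 sc onE multc onP; rewrite -ramification_count // -multc; apply: ordEq_pullback.
Qed.

Lemma conjc_sqrt_signed (v : C) (r : R) k :
  v ^+ 2 = rc r -> 0 <= (-1) ^+ k * r -> conjc v = (-1) ^+ k * v.
Proof.
case: v => p q; rewrite -[(-1) ^+ k : R]signr_odd -[(-1) ^+ k : C]signr_odd expr2.
rewrite {1}/GRing.mul /= => -[re im]; have /eqP : p * q = 0 by lra.
rewrite mulf_eq0 => /orP [] /eqP pq0.
all: move: re; rewrite pq0 ?mul0r ?mulr0 ?sub0r ?subr0 => <-.
all: by case: (odd k); rewrite ?mulN1r ?mul1r => sgn; apply/eqP; rewrite eq_complex /=; nra.
Qed.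

Lemma sign_prod_sub (x : R) (P : pred nat) (r : seq nat) :
  {in r, forall j, P j -> x <= a j} -> {in r, forall j, ~~ P j -> a j <= x} ->
  0 <= (-1) ^+ count P r * \prod_(j <- r) (x - a j).
Proof.
elim: r => [|j r IH] hP hN; first by rewrite big_nil mulr1.
rewrite big_cons /= exprD mulrACA mulr_ge0 //; last first.
  by apply: IH => k kr; [apply: hP | apply: hN]; rewrite inE kr orbT.
case: (boolP (P j)) => Pj /=.
  by rewrite mulN1r opprB subr_ge0 hP ?mem_head.
by rewrite mul1r subr_ge0 hN ?mem_head.
Qed.

Lemma fpoly_real (x : R) :
  fpoly.[rc x] = rc (\prod_(1 <= j < (2 * n).+1) (x - a j)).
Proof.
by rewrite horner_prod rmorph_prod; apply: eq_bigr => j _; rewrite hornerXsubC rmorphB.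
Qed.

Lemma count_iota_gt m N : (m <= N)%N -> count (fun j => m < j)%N (iota 1 N) = (N - m)%N.
Proof.
move=> mN; rewrite -(subnKC mN) iotaD count_cat addKn.
rewrite (@eq_in_count _ _ pred0) ?count_pred0; last first.
  by move=> j; rewrite mem_iota => jm; apply/negbTE; lia.
by rewrite (@eq_in_count _ _ predT) ?count_predT ?size_iota // => j; rewrite mem_iota /=; lia.
Qed.

Hypothesis a_increasing : forall j, (1 <= j < 2 * n)%N -> a j < a j.+1.

Lemma a_nondecreasing j k : (1 <= j <= k)%N -> (k <= 2 * n)%N -> a j <= a k.
Proof.
move=> /andP [j1 jk] k2n.
apply: (@homo_leq_in _ [pred j | 1 <= j <= 2 * n]%N a <=%R) => //; rewrite ?inE; try lia.
- exact: le_trans.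
- by move=> i l; rewrite !inE => ? ? m ?; rewrite inE; lia.
- by move=> i; rewrite !inE => ? ?; apply: ltW; apply: a_increasing; lia.
Qed.

Lemma conjc_sqrt_fpoly m (x : R) (v : C) : (m <= 2 * n)%N ->
  (forall j, (1 <= j <= m)%N -> a j <= x) -> (forall j, (m < j <= 2 * n)%N -> x <= a j) ->
  v ^+ 2 = fpoly.[rc x] -> conjc v = (-1) ^+ m * v.
Proof.
move=> m2n left right; rewrite fpoly_real => v2.
have sgn : 0 <= (-1) ^+ (2 * n - m) * \prod_(1 <= j < (2 * n).+1) (x - a j).
  rewrite -(count_iota_gt m2n) /index_iota subSS subn0.
  apply: sign_prod_sub => j; rewrite mem_iota => ? ?.
    by apply: right; lia.
  by apply: left; lia.
by rewrite (conjc_sqrt_signed v2 sgn) -signr_odd oddB // oddM /= signr_odd.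
Qed.

Lemma sigma_real_point m (x : R) (v : C) : (m <= 2 * n)%N ->
  (forall j, (1 <= j <= m)%N -> a j <= x) -> (forall j, (m < j <= 2 * n)%N -> x <= a j) ->
  onSigma (inl (rc x, v)) ->
  sigma (inl (rc x, v)) = if odd (n + m) then tau (inl (rc x, v)) else inl (rc x, v).
Proof.
move=> m2n left right /= v2.
rewrite oppr0 (conjc_sqrt_fpoly m2n left right v2) mulrA -exprD -signr_odd.
by case: odd; rewrite ?mulN1r ?mul1r.
Qed.

Lemma sigma_overI i (q : point R) : (i < 2 * n)%N -> onSigma q -> overI n a i q ->
  sigma q = if odd (n + i) then tau q else q.
Proof.
move=> i2n + ov; rewrite /overI in ov; case: eqP ov => [-> | _].
  case=> [[s ->] | [x [v [-> [x_le | le_x]]]]] onq.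
  - by rewrite /= addn0; case: (odd n).
  - apply: sigma_real_point => // j; first lia.
    by move=> /andP [? ?]; apply: le_trans x_le (a_nondecreasing _ _); lia.
  - have -> : odd (n + 0) = odd (n + 2 * n) by rewrite addn0 oddD oddM andFb addbF.
    apply: sigma_real_point => // j; last lia.
    by move=> /andP [? ?]; apply: le_trans (a_nondecreasing _ _) le_x; lia.
case=> x [v [-> /andP [le_x x_le]]] onq.
apply: sigma_real_point => [|j /andP [? ?]|j /andP [? ?]|//].
- exact: ltnW.
- by apply: le_trans (a_nondecreasing _ _) le_x; lia.
- by apply: le_trans x_le (a_nondecreasing _ _); lia.
Qed.

Local Notation rpt := (@rpt R a).

Lemma fpoly_branch j : (1 <= j <= 2 * n)%N -> fpoly.[rc (a j)] = 0.
Proof.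
move=> j2n; rewrite horner_prod (bigD1_seq j) ?mem_index_iota ?iota_uniq //=.
by rewrite hornerXsubC subrr mul0r.
Qed.

Lemma onSigma_rpt j : (1 <= j <= 2 * n)%N -> onSigma (rpt j).
Proof. by move=> j2n /=; rewrite fpoly_branch // expr0n. Qed.

Lemma tau_rpt j : tau (rpt j) = rpt j.
Proof. by rewrite /= oppr0. Qed.

Lemma sigma_rpt j : sigma (rpt j) = rpt j.
Proof. by rewrite /sigma /rpt conjc_real conjc0 mulr0. Qed.

(* With q + sigma q this gives e (q + tau q) whether sigma q is q (e even) or tau q (e odd). *)
Definition half_pullback (s : seq nat) e (q : point R) : seq (point R) :=
  map rpt s ++ nseq (e.-1)./2 q ++ nseq e./2 (tau q).

Section HalfPullback.
Variables (s : seq nat) (e : nat) (q : point R).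
Hypothesis e_gt0 : (0 < e)%N.
Hypothesis sigma_q : sigma q = if odd e then tau q else q.
Local Notation E := (map rpt s ++ nseq e q).

Lemma half_pullback_sizes : (((e.-1)./2 + e./2).+1 = e /\ e./2 = (e.-1)./2 + ~~ odd e)%N.
Proof.
case: e e_gt0 => // e' _ /=; rewrite uphalf_half; have := odd_double_half e'.
by case: odd => /= he'; split=> //; lia.
Qed.

Lemma count_half_pullback (P : point R) :
  count_mem P (E ++ map tau E) =
  ((P == q) + (P == sigma q) + 2 * count_mem P (half_pullback s e q))%N.
Proof.
rewrite map_cat -map_comp (eq_map tau_rpt) map_nseq !count_cat !count_nseq sigma_q /=.
have [sz half] := half_pullback_sizes; rewrite ![P == _]eq_sym.
case: (odd e) half => /= half.
all: by case: (q == P); case: (tau q == P); rewrite /= ?mul1n ?mul0n; lia.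
Qed.

Lemma realEffDiv_half_pullback :
  {in s, forall j, 1 <= j <= 2 * n}%N -> (size s + e = n)%N -> onSigma q ->
  realEffDiv n a (half_pullback s e q) (n - 1).
Proof.
move=> s2n sz onq; have [sz_half half] := half_pullback_sizes; split; [|split].
- move=> P; rewrite !mem_cat => /or3P [/mapP [j js ->] | | ].
  + exact: onSigma_rpt (s2n j js).
  + by rewrite mem_nseq => /andP [_ /eqP ->].
  + by rewrite mem_nseq => /andP [_ /eqP ->]; apply: onSigma_tau.
- by rewrite !size_cat size_map !size_nseq; lia.
- rewrite !map_cat -map_comp (eq_map sigma_rpt) !map_nseq sigma_tau sigma_q.
  rewrite /half_pullback; case: (odd e) half => [/= -> | _]; last exact: perm_refl.
  by rewrite addn0 tauK perm_cat2l perm_catC.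
Qed.

End HalfPullback.

Lemma proposition6p2_pullback (c : {poly C}) (s : seq nat) e (q : point R) :
  {in s, forall j, 1 <= j <= 2 * n}%N -> (size s + e = n)%N -> (0 < e)%N ->
  onSigma q -> sigma q = (if odd e then tau q else q) -> isHyperplane n c 0 ->
  (forall x, multLam c x = count_mem x ([seq Some (rc (a j)) | j <- s] ++ nseq e (proj q))) ->
  exists D' : seq (point R), realEffDiv n a D' (n - 1) /\
    forall P, onSigma P -> ordEq n c 0%:P P ((P == q) + (P == sigma q) + 2 * count_mem P D')%N.
Proof.
move=> s2n sz e_gt0 onq sigma_q [size_c [_ c_neq0]] multc.
exists (half_pullback s e q); split; first exact: realEffDiv_half_pullback.
move=> P onP; rewrite -count_half_pullback //; apply: ordEq_pullback_divisor => //.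
- by case: c_neq0 => //; rewrite polyC0 eqxx.
- move=> Q; rewrite mem_cat => /orP [/mapP [j js ->] | /nseqP [-> _]] //.
  exact: onSigma_rpt (s2n j js).
- by move=> x; rewrite multc map_cat -map_comp map_nseq.
Qed.

Lemma realEffDiv_rem (D : seq (point R)) d (q : point R) : sigma q = q -> q \in D ->
  realEffDiv n a D d -> realEffDiv n a (rem q D) d.-1.
Proof.
move=> sigma_q qD [onD [<- sigmaD]]; split; [|split].
- by move=> P /mem_rem /onD.
- exact: size_rem.
- have := perm_map sigma (perm_to_rem qD); rewrite /= sigma_q perm_sym => sigma_rem.
  by rewrite -(perm_cons q) (perm_trans sigma_rem (perm_trans sigmaD (perm_to_rem qD))).
Qed.

Lemma proposition6p2_central (c : {poly C}) (b : C) (q : point R) (D : seq (point R)) :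
  sigma q = q -> q \in D -> realEffDiv n a D n ->
  (forall P, onSigma P -> ordEq n c b%:P P (2 * count_mem P D)) ->
  exists D' : seq (point R), realEffDiv n a D' (n - 1) /\
    forall P, onSigma P -> ordEq n c b%:P P ((P == q) + (P == sigma q) + 2 * count_mem P D')%N.
Proof.
move=> sigma_q qD realD ordD; exists (rem q D); split.
  by rewrite subn1; apply: realEffDiv_rem.
move=> P onP; have := ordD P onP; rewrite sigma_q (permP (perm_to_rem qD)) /= eq_sym.
by congr ordEq; lia.
Qed.

End Curve.

Theorem proposition6p2 (R : rcfType) (n : nat) (a : nat -> R) :
  (2 <= n)%N ->
  (forall j, (1 <= j < 2 * n)%N -> a j < a j.+1) ->
  forall (i : nat) (q : point R), (i < 2 * n)%N ->
  onSigma n a q -> overI n a i q ->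
  forall (c : {poly R[i]}) (b : R[i]), hq n a i q c b ->
  exists D' : seq (point R),
    realEffDiv n a D' (n - 1) /\
    forall P : point R, onSigma n a P ->
      ordEq n a n c b%:P P
        ((P == q) + (P == sigma n q) + 2 * count_mem P D')%N.
Proof.
move=> _ a_increasing i q i2n onq overq c b.
have sigma_q := sigma_overI a_increasing i2n onq overq.
rewrite /hq; case: ltnP => [i_lt_n | n_le_i].
  case=> -> [hyp_c mult_c].
  apply: (proposition6p2_pullback (s := iota 1 i)) mult_c => //.
  - by move=> j; rewrite mem_iota; lia.
  - by rewrite size_iota; lia.
  - by lia.
  - by rewrite sigma_q oddB ?oddD // ltnW.
case: ltnP => [n_lt_i | i_le_n].
  case=> -> [hyp_c mult_c].
  apply: (proposition6p2_pullback (s := iota i.+1 (2 * n - i))) mult_c => //.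
  - by move=> j; rewrite mem_iota; lia.
  - by rewrite size_iota; lia.
  - by lia.
  - by rewrite sigma_q oddB ?oddD 1?addbC // ltnW.
have i_eq_n : i = n by apply/eqP; rewrite eqn_leq i_le_n n_le_i.
case=> _ [D [realD [qD [_ ordD]]]]; apply: proposition6p2_central ordD => //.
by rewrite sigma_q i_eq_n addnn odd_double.
Qed.
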